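(* Let $X_\Sigma$ be a projective toric variety, $D\in\mathrm{Amp}(X_\Sigma)_{\mathbf R}$ and $x\in\mathbf C^{\Sigma(1)}$. Then the linear function $\langle\chi_D,-\rangle:\Gamma(G)_{\mathbf R}\to\mathbf R$ takes a negative value on the cone $\sigma_x$ if and only if $x\in Z(\Sigma)$.
   Context: $\Sigma$ complete fan with rays $\Sigma(1)$, primitive generators $u_\rho$, divisors $D_\rho$. A primitive collection is $C\subset\Sigma(1)$ not contained in $\sigma(1)$ for any cone $\sigma\in\Sigma$ while every proper subset is; $Z(\Sigma)=\bigcup_CV(x_\rho:\rho\in C)\subset\mathbf C^{\Sigma(1)}=\mathrm{Spec}\,\mathbf C[x_\rho:\rho\in\Sigma(1)]$. $\Gamma(G)=\{b\in\mathbf Z^{\Sigma(1)}:\sum_\rho b_\rho u_\rho=0\}$ (one-parameter subgroups of $G=\mathrm{Hom}(\mathrm{Cl}(X_\Sigma),\mathbf C^\times)$); for $D=\sum a_\rho D_\rho$, $\langle\chi_D,b\rangle=\sum a_\rho b_\rho$, extended $\mathbf R$-linearly to $\mathrm{Pic}(X_\Sigma)_{\mathbf R}\times\Gamma(G)_{\mathbf R}$. $\mathrm{Amp}(X_\Sigma)_{\mathbf R}$ is the ample cone (real cone over ample divisors in $\mathrm{Pic}(X_\Sigma)_{\mathbf R}$). $\sigma_x=\{v\in\Gamma(G)_{\mathbf R}:v_\rho\ge0\text{ for all }\rho\text{ with }x_\rho\ne0\}$. *)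

From mathcomp Require Import all_boot all_order all_algebra.
From mathcomp Require Import reals.
From mathcomp Require Export complex.
Set Implicit Arguments. Unset Strict Implicit. Unset Printing Implicit Defensive.
Import Order.TTheory GRing.Theory Num.Theory.
Local Open Scope ring_scope.

Section Toric.
Variable R : realType.
(* N = Z^n, rays of the fan indexed by 'I_r, primitive generators u rho in Z^n *)
Variables (n r : nat) (u : 'I_r -> 'I_n -> int).
(* A fan is recorded by the ray sets sigma(1) of its cones *)
Variable Sigma : {set {set 'I_r}}.

Definition dotR (m v : 'I_n -> R) : R := \sum_(i < n) m i * v i.
Definition uR (rho : 'I_r) : 'I_n -> R := fun i => (u rho i)%:~R.

Definition in_cone (S : {set 'I_r}) (v : 'I_n -> R) : Prop :=
  exists lam : 'I_r -> R, (forall rho, 0 <= lam rho) /\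
    forall i, v i = \sum_(rho in S) lam rho * uR rho i.

Definition face_of (S : {set 'I_r}) (F : ('I_n -> R) -> Prop) : Prop :=
  exists m : 'I_n -> R, (forall v, in_cone S v -> 0 <= dotR m v) /\
    forall v, F v <-> (in_cone S v /\ dotR m v = 0).

(* Sigma is a fan of strongly convex rational polyhedral cones whose cone with
   ray set S has exactly the rays u_rho (rho in S), and Sigma(1) = 'I_r *)
Definition is_fan : Prop :=
  [/\ (forall S, S \in Sigma -> forall v, in_cone S v ->
          in_cone S (fun i => - v i) -> v = (fun _ => 0)),
      (forall S, S \in Sigma -> forall F, face_of S F ->
          exists2 T, T \in Sigma & forall v, F v <-> in_cone T v),
      (forall S T, S \in Sigma -> T \in Sigma ->
          face_of S (fun v => in_cone S v /\ in_cone T v) /\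
          face_of T (fun v => in_cone S v /\ in_cone T v)),
      (forall rho, [set rho] \in Sigma) &
      ((forall rho rho', (forall v, in_cone [set rho] v <-> in_cone [set rho'] v) ->
          rho = rho') /\
       (forall S, S \in Sigma -> forall rho,
          rho \in S <-> face_of S (in_cone [set rho])))].

Definition primitive_gens : Prop :=
  forall rho (k : int) (w : 'I_n -> int), (forall i, u rho i = k * w i) ->
    k = 1 \/ k = -1.

Definition complete_fan : Prop := forall v : 'I_n -> R, exists2 S, S \in Sigma & in_cone S v.

Definition max_cone (S : {set 'I_r}) : Prop :=
  S \in Sigma /\ forall T, T \in Sigma -> S \subset T -> T = S.

Definition dotZ (m w : 'I_n -> int) : int := \sum_(i < n) m i * w i.

(* An integral torus-invariant divisor D = sum_rho d_rho D_rho on the complete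
   toric variety X_Sigma is ample iff it is Cartier and its support function
   is strictly convex (Cox-Little-Schenck Thm 4.2.8, 6.1.14, Lemma 6.1.13). *)
Definition ample_div (d : 'I_r -> int) : Prop :=
  forall S, max_cone S -> exists m : 'I_n -> int,
    (forall rho, rho \in S -> dotZ m (u rho) = - d rho) /\
    (forall rho, rho \notin S -> - d rho < dotZ m (u rho)).

Definition projective : Prop := exists d, ample_div d.

(* a real divisor a = sum a_rho D_rho whose class lies in Amp(X_Sigma)_R:
   its class is a positive real combination of classes of ample divisors *)
Definition in_Amp (a : 'I_r -> R) : Prop :=
  exists k (c : 'I_k.+1 -> R) (d : 'I_k.+1 -> 'I_r -> int) (m : 'I_n -> R),
    [/\ forall j, 0 < c j, forall j, ample_div (d j) &
        forall rho, a rho = \sum_(j < k.+1) c j * (d j rho)%:~R + dotR m (uR rho)].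

Definition GammaR (b : 'I_r -> R) : Prop :=
  forall i, \sum_(rho < r) b rho * uR rho i = 0.

Definition pairing (a b : 'I_r -> R) : R := \sum_(rho < r) a rho * b rho.

Definition sigma_x (x : 'I_r -> R[i]) (b : 'I_r -> R) : Prop :=
  GammaR b /\ forall rho, x rho != 0 -> 0 <= b rho.

Definition primitive_collection (C : {set 'I_r}) : Prop :=
  (forall S, S \in Sigma -> ~~ (C \subset S)) /\
  (forall C' : {set 'I_r}, C' \proper C -> exists2 S, S \in Sigma & C' \subset S).

Definition in_Z (x : 'I_r -> R[i]) : Prop :=
  exists C, primitive_collection C /\ forall rho, rho \in C -> x rho = 0.

End Toric.

From mathcomp Require Import all_boot all_order all_algebra.
From mathcomp Require Import reals complex.
Set Implicit Arguments. Unset Strict Implicit. Unset Printing Implicit Defensive.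
Import Order.TTheory GRing.Theory Num.Theory.
Local Open Scope ring_scope.

(* For b in Gamma(G)_R the pairing <chi_D, b> only depends on the class of D,
   so an ample D may be replaced, near a maximal cone sigma, by the linearly
   equivalent divisor that vanishes on sigma(1) and is positive on the other
   rays.  Hence <chi_D, b> >= 0 as soon as b >= 0 off sigma(1).  If the zero
   set of x lies in some cone this applies to every b in sigma_x; otherwise it
   contains a primitive collection.  Conversely, for a primitive collection C
   the relation sum_(rho in C) u_rho = sum_(rho in tau(1)) lam_rho u_rho given
   by completeness yields b in sigma_x that is <= 0 off any maximal cone
   containing tau and < 0 on the rays of C outside it, so <chi_D, b> < 0. *)

Lemma sumr_lt0 (R : numDomainType) (I : finType) (P : pred I) (F : I -> R) i0 :
  P i0 -> F i0 < 0 -> (forall i, P i -> F i <= 0) -> \sum_(i | P i) F i < 0.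
Proof.
move=> Pi0 Fi0_lt0 F_le0; rewrite (bigD1 i0) //= -[X in _ < X]addr0.
by apply: ltr_leD => //; apply: sumr_le0 => i /andP[/F_le0].
Qed.

Section Cones.
Variables (r : nat) (Sigma : {set {set 'I_r}}).

Lemma max_cone_sup T : T \in Sigma -> exists2 S, max_cone Sigma S & T \subset S.
Proof.
move=> T_cone.
pose P := [pred S : {set 'I_r} | (S \in Sigma) && (T \subset S)].
have PT : P T by rewrite /= T_cone subxx.
case: (@arg_maxnP _ T P (fun S => #|S|) PT) => S /andP[S_cone TS] S_max.
exists S => //; split=> // S' S'_cone SS'.
apply/eqP; rewrite eq_sym eqEcard SS' /=.
by apply: S_max; rewrite /= S'_cone (subset_trans TS SS').
Qed.

Lemma primitive_collection_sub (X : {set 'I_r}) :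
  (forall S, S \in Sigma -> ~~ (X \subset S)) ->
  exists2 C, primitive_collection Sigma C & C \subset X.
Proof.
move=> X_not_in_cone.
pose P := [pred C : {set 'I_r} |
  (C \subset X) && [forall S in Sigma, ~~ (C \subset S)]].
have PX : P X by rewrite /= subxx; apply/forall_inP.
case: (@arg_minnP _ X P (fun C => #|C|) PX) => C /andP[CX /forall_inP C_not_in_cone] C_min.
exists C => //; split=> // C' C'C.
apply/exists_inP; apply: contraT; rewrite negb_exists_in => /forall_inP C'_not_in_cone.
have PC' : P C' by rewrite /= (subset_trans (proper_sub C'C) CX); apply/forall_inP.
by have := leq_ltn_trans (C_min C' PC') (proper_card C'C); rewrite ltnn.
Qed.

End Cones.

Section Pairing.
Variables (R : realType) (n r : nat) (u : 'I_r -> 'I_n -> int).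
Variable Sigma : {set {set 'I_r}}.

Lemma pairing_principal (m : 'I_n -> R) (b : 'I_r -> R) :
  GammaR u b -> pairing (fun rho => dotR m (uR R u rho)) b = 0.
Proof.
move=> Gb; rewrite /pairing.
under eq_bigr => rho _ do rewrite /dotR mulr_suml.
rewrite exchange_big big1 // => i _.
under eq_bigr => rho _ do rewrite -mulrA mulrC (mulrC (uR _ _ _ _)).
by rewrite -mulr_suml Gb mul0r.
Qed.

Lemma ample_pairing_off_cone (d : 'I_r -> int) S b :
  ample_div u Sigma d -> max_cone Sigma S -> GammaR u b ->
  exists2 e : 'I_r -> R, (forall rho, rho \notin S -> 0 < e rho) &
    pairing (fun rho => (d rho)%:~R) b = \sum_(rho | rho \notin S) e rho * b rho.
Proof.
move=> d_ample S_max Gb; have [m [mS m_off]] := d_ample S S_max.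
pose mR i : R := (m i)%:~R.
have dot_mR rho : dotR mR (uR R u rho) = (dotZ m (u rho))%:~R.
  by rewrite /dotR /dotZ rmorph_sum; apply: eq_bigr => i _; rewrite rmorphM.
pose e rho := (d rho)%:~R + dotR mR (uR R u rho).
exists e => [rho /m_off d_lt|].
  by rewrite /e dot_mR -rmorphD ltr0z -(ltrD2l (- d rho)) addr0 addKr.
have -> : pairing (fun rho => (d rho)%:~R) b = pairing e b.
  by rewrite -[LHS]addr0 -(pairing_principal mR Gb) /pairing -big_split;
     apply: eq_bigr => rho _; rewrite mulrDl.
rewrite /pairing (bigID (mem S)) /= big1 ?add0r // => rho /mS dS.
by rewrite /e dot_mR dS rmorphN addrN mul0r.
Qed.

Lemma in_Amp_pairing (a : 'I_r -> R) :
  in_Amp u Sigma a -> exists k (c : 'I_k.+1 -> R) (d : 'I_k.+1 -> 'I_r -> int),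
   [/\ forall j, 0 < c j, forall j, ample_div u Sigma (d j) &
     forall b, GammaR u b ->
       pairing a b = \sum_(j < k.+1) c j * pairing (fun rho => (d j rho)%:~R) b].
Proof.
move=> [k [c [d [m [c_gt0 d_ample a_def]]]]]; exists k, c, d; split=> // b Gb.
rewrite /pairing; under eq_bigr => rho _ do rewrite a_def mulrDl.
rewrite big_split /= [X in _ + X](pairing_principal m Gb) addr0.
under eq_bigr => rho _ do rewrite mulr_suml.
rewrite exchange_big; apply: eq_bigr => j _.
by rewrite mulr_sumr; apply: eq_bigr => rho _; rewrite mulrA.
Qed.

Variables (a : 'I_r -> R) (S : {set 'I_r}) (b : 'I_r -> R).
Hypotheses (a_Amp : in_Amp u Sigma a) (S_max : max_cone Sigma S) (Gb : GammaR u b).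

Lemma Amp_pairing_ge0 : (forall rho, rho \notin S -> 0 <= b rho) -> 0 <= pairing a b.
Proof.
move=> b_ge0; have [k [c [d [c_gt0 d_ample ->]]]] := in_Amp_pairing a_Amp => //.
apply: sumr_ge0 => j _; rewrite pmulr_rge0 //.
have [e e_gt0 ->] := ample_pairing_off_cone (d_ample j) S_max Gb.
by apply: sumr_ge0 => rho rho_notS; rewrite mulr_ge0 ?b_ge0 ?ltW ?e_gt0.
Qed.

Lemma Amp_pairing_lt0 rho0 : rho0 \notin S -> b rho0 < 0 ->
  (forall rho, rho \notin S -> b rho <= 0) -> pairing a b < 0.
Proof.
move=> rho0_notS b_rho0 b_le0.
have [k [c [d [c_gt0 d_ample ->]]]] := in_Amp_pairing a_Amp => //.
have d_lt0 j : pairing (fun rho => (d j rho)%:~R) b < 0.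
  have [e e_gt0 ->] := ample_pairing_off_cone (d_ample j) S_max Gb.
  apply: (@sumr_lt0 _ _ _ _ rho0) => // [|rho rho_notS].
    by rewrite pmulr_rlt0 ?e_gt0.
  by rewrite pmulr_rle0 ?e_gt0 ?b_le0.
apply: (@sumr_lt0 _ _ _ _ ord0) => // [|j _]; first by rewrite pmulr_rlt0 ?c_gt0.
by rewrite pmulr_rle0 ?c_gt0 ?ltW.
Qed.

End Pairing.

Section PrimitiveRelation.
Variables (R : realType) (n r : nat) (u : 'I_r -> 'I_n -> int).
Variables (C T : {set 'I_r}) (lam : 'I_r -> R).

Definition primitive_relation (rho : 'I_r) : R :=
  (if rho \in T then lam rho else 0) - (if rho \in C then 1 else 0).

Lemma GammaR_primitive_relation :
  (forall i, \sum_(rho in C) uR R u rho i = \sum_(rho in T) lam rho * uR R u rho i) ->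
  GammaR u primitive_relation.
Proof.
move=> sumC i; rewrite /primitive_relation.
under eq_bigr => rho _ do rewrite mulrBl !(fun_if (fun y => y * _)) !mul0r mul1r.
by rewrite sumrB -!big_mkcond sumC subrr.
Qed.

End PrimitiveRelation.

Theorem proposition5p3 (R : realType) (n r : nat) (u : 'I_r -> 'I_n -> int)
    (Sigma : {set {set 'I_r}}) :
  is_fan R u Sigma -> primitive_gens u -> complete_fan R u Sigma ->
  projective u Sigma ->
  forall (a : 'I_r -> R), in_Amp u Sigma a ->
  forall x : 'I_r -> R[i],
    (exists2 b : 'I_r -> R, sigma_x u x b & pairing a b < 0) <-> in_Z Sigma x.
Proof.
move=> _ _ complete _ a a_Amp x; split.
- case=> b [Gb b_ge0] ab_lt0.
  pose Z := [set rho | x rho == 0].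
  have Z_not_in_cone S : S \in Sigma -> ~~ (Z \subset S).
    move=> /max_cone_sup[S' S'_max SS']; apply/negP => ZS.
    move: ab_lt0; rewrite ltNge (Amp_pairing_ge0 a_Amp S'_max Gb) // => rho rho_notS'.
    apply: b_ge0; apply: contra rho_notS' => x_rho0.
    by rewrite (subsetP SS') // (subsetP ZS) // inE.
  have [C C_prim CZ] := primitive_collection_sub Z_not_in_cone.
  by exists C; split=> // rho /(subsetP CZ); rewrite inE => /eqP.
- case=> C [[C_not_in_cone _] xC].
  have [T T_cone [lam [lam_ge0 sumC]]] := complete (fun i => \sum_(rho in C) uR R u rho i).
  have [S S_max TS] := max_cone_sup T_cone.
  have [rho0 rho0C rho0_notS] := subsetPn (C_not_in_cone S S_max.1).
  have notT rho : rho \notin S -> rho \notin T by apply: contra; apply: (subsetP TS).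
  have Gb := GammaR_primitive_relation sumC.
  exists (primitive_relation C T lam).
    split=> // rho x_rho; have rho_notC : rho \notin C by apply: contra x_rho => /xC ->.
    by rewrite /primitive_relation (negbTE rho_notC) subr0; case: ifP => // _; apply: lam_ge0.
  apply: (Amp_pairing_lt0 a_Amp S_max Gb rho0_notS).
    by rewrite /primitive_relation (negbTE (notT _ rho0_notS)) rho0C sub0r ltrN10.
  move=> rho /notT rho_notT; rewrite /primitive_relation (negbTE rho_notT) sub0r oppr_le0.
  by case: ifP.
Qed.
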